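(* Let $a\neq 0$ be a real constant and suppose $u=f(x,t)$ is a solution of the Hirota–Ramani equation $$u_t-u_{xxt}+a\,u_x(1-u_t)=0.$$ Then for every real $s$ the following functions are also solutions of this equation: $$f(x-s,t),\qquad f(x,t-s),\qquad f(x,t)+\frac{s}{a},$$ $$e^{s}f\big(xe^{s},\,te^{-3s}\big)+\frac{x}{a}\big(1-e^{2s}\big)+t\big(1-e^{-2s}\big).$$ *)

From Stdlib Require Import Reals.
From Coquelicot Require Import Coquelicot.
Open Scope R_scope.

Definition pd_x (u : R -> R -> R) : R -> R -> R :=
  fun x t => Derive (fun y => u y t) x.
Definition pd_t (u : R -> R -> R) : R -> R -> R :=
  fun x t => Derive (fun y => u x y) t.

Definition HR_solution (a : R) (u : R -> R -> R) : Prop :=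
  forall x t,
    ex_derive (fun y => u y t) x /\
    ex_derive (fun y => u x y) t /\
    ex_derive (fun y => pd_x u y t) x /\
    ex_derive (fun s => pd_x (pd_x u) x s) t /\
    pd_t u x t - pd_t (pd_x (pd_x u)) x t
      + a * pd_x u x t * (1 - pd_t u x t) = 0.

(** Every symmetry in the theorem is an affine change of the dependent and
    independent variables,
      g(x,t) = A f(al x + be, ga t + de) + B x + C t + D.
    Differentiating, g_x, g_t and g_xxt are the corresponding derivatives of
    f, rescaled by A al, A ga, A al^2 ga and shifted by B, C, 0.  So g solves
    the equation as soon as the polynomial u_t - u_xxt + a u_x (1 - u_t) is
    unchanged by this substitution of its three arguments, which is a direct
    computation for each of the four transformations.  For the scaling with
    l = e^s, the shifts (1 - l^2)/a and 1 - l^-2 are exactly what absorbs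
    the factor l^-2 that rescaling produces in u_t and in 1 - u_t. *)

From Stdlib Require Import Reals FunctionalExtensionality.
From Coquelicot Require Import Coquelicot.
Open Scope R_scope.

Lemma is_derive_affine_comp (h : R -> R) (A al be B K x : R) :
  ex_derive h (al * x + be) ->
  is_derive (fun y => A * h (al * y + be) + B * y + K) x
            (A * al * Derive h (al * x + be) + B).
Proof.
  intros hx; auto_derive; [exact hx |].
  change (fun z => h z) with h; ring.
Qed.

Definition affine_transform (A al be ga de B C D : R) (u : R -> R -> R) :
  R -> R -> R :=
  fun x t => A * u (al * x + be) (ga * t + de) + B * x + C * t + D.

Section AffineTransform.

Variables (A al be ga de B C D : R) (u : R -> R -> R).

Let g := affine_transform A al be ga de B C D u.

Lemma is_derive_x_affine_transform x t :
  ex_derive (fun y => u y (ga * t + de)) (al * x + be) ->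
  is_derive (fun y => g y t) x (A * al * pd_x u (al * x + be) (ga * t + de) + B).
Proof.
  intros hx.
  eapply is_derive_ext; [| exact (is_derive_affine_comp _ A al be B (C * t + D) x hx)].
  intros y; unfold g, affine_transform; simpl; ring.
Qed.

Lemma is_derive_t_affine_transform x t :
  ex_derive (fun y => u (al * x + be) y) (ga * t + de) ->
  is_derive (fun y => g x y) t (A * ga * pd_t u (al * x + be) (ga * t + de) + C).
Proof.
  intros ht.
  eapply is_derive_ext; [| exact (is_derive_affine_comp _ A ga de C (B * x + D) t ht)].
  intros y; unfold g, affine_transform; simpl; ring.
Qed.

Hypothesis ex_derive_x : forall x t, ex_derive (fun y => u y t) x.
Hypothesis ex_derive_t : forall x t, ex_derive (fun y => u x y) t.

Lemma ex_derive_x_affine_transform x t : ex_derive (fun y => g y t) x.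
Proof. eexists; apply is_derive_x_affine_transform, ex_derive_x. Qed.

Lemma ex_derive_t_affine_transform x t : ex_derive (fun y => g x y) t.
Proof. eexists; apply is_derive_t_affine_transform, ex_derive_t. Qed.

Lemma pd_x_affine_transform :
  pd_x g = affine_transform (A * al) al be ga de 0 0 B (pd_x u).
Proof.
  apply functional_extensionality; intros x; apply functional_extensionality; intros t.
  transitivity (A * al * pd_x u (al * x + be) (ga * t + de) + B).
  - apply is_derive_unique, is_derive_x_affine_transform, ex_derive_x.
  - unfold affine_transform; ring.
Qed.

Lemma pd_t_affine_transform :
  pd_t g = affine_transform (A * ga) al be ga de 0 0 C (pd_t u).
Proof.
  apply functional_extensionality; intros x; apply functional_extensionality; intros t.
  transitivity (A * ga * pd_t u (al * x + be) (ga * t + de) + C).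
  - apply is_derive_unique, is_derive_t_affine_transform, ex_derive_t.
  - unfold affine_transform; ring.
Qed.

End AffineTransform.

Definition HR_regular (u : R -> R -> R) : Prop :=
  forall x t,
    ex_derive (fun y => u y t) x /\
    ex_derive (fun y => u x y) t /\
    ex_derive (fun y => pd_x u y t) x /\
    ex_derive (fun s => pd_x (pd_x u) x s) t.

Definition HR_lhs (a ux ut uxxt : R) : R := ut - uxxt + a * ux * (1 - ut).

Lemma HR_solution_iff (a : R) (u : R -> R -> R) :
  HR_solution a u <->
  HR_regular u /\
  forall x t, HR_lhs a (pd_x u x t) (pd_t u x t) (pd_t (pd_x (pd_x u)) x t) = 0.
Proof.
  unfold HR_solution, HR_regular, HR_lhs; split.
  - intros hu; split; intros x t; destruct (hu x t) as (? & ? & ? & ? & ?); tauto.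
  - intros [reg hu] x t; specialize (hu x t); destruct (reg x t) as (? & ? & ? & ?); tauto.
Qed.

Lemma HR_solution_ext (a : R) (u v : R -> R -> R) :
  (forall x t, u x t = v x t) -> HR_solution a u -> HR_solution a v.
Proof.
  intros huv; replace v with u; [easy |].
  apply functional_extensionality; intros x; apply functional_extensionality; auto.
Qed.

Section AffineSymmetry.

Variables (a A al be ga de B C D : R) (u : R -> R -> R).

Let g := affine_transform A al be ga de B C D u.

Hypothesis u_regular : HR_regular u.

Let ux x t : ex_derive (fun y => u y t) x := proj1 (u_regular x t).
Let ut x t : ex_derive (fun y => u x y) t := proj1 (proj2 (u_regular x t)).
Let uxx x t : ex_derive (fun y => pd_x u y t) x := proj1 (proj2 (proj2 (u_regular x t))).
Let uxxt x t : ex_derive (fun y => pd_x (pd_x u) x y) t :=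
  proj2 (proj2 (proj2 (u_regular x t))).

Lemma pd_xx_affine_transform :
  pd_x (pd_x g) = affine_transform (A * al * al) al be ga de 0 0 0 (pd_x (pd_x u)).
Proof.
  unfold g; rewrite !pd_x_affine_transform by (exact ux || exact uxx); reflexivity.
Qed.

Lemma HR_regular_affine_transform : HR_regular g.
Proof.
  intros x t; rewrite pd_xx_affine_transform; unfold g.
  rewrite pd_x_affine_transform by exact ux.
  repeat split.
  - apply ex_derive_x_affine_transform, ux.
  - apply ex_derive_t_affine_transform, ut.
  - apply ex_derive_x_affine_transform, uxx.
  - apply ex_derive_t_affine_transform, uxxt.
Qed.

Lemma HR_lhs_affine_transform x t :
  HR_lhs a (pd_x g x t) (pd_t g x t) (pd_t (pd_x (pd_x g)) x t) =
  HR_lhs a (A * al * pd_x u (al * x + be) (ga * t + de) + B)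
           (A * ga * pd_t u (al * x + be) (ga * t + de) + C)
           (A * al * al * ga * pd_t (pd_x (pd_x u)) (al * x + be) (ga * t + de)).
Proof.
  rewrite pd_xx_affine_transform, pd_t_affine_transform by exact uxxt.
  unfold g; rewrite pd_x_affine_transform, pd_t_affine_transform by (exact ux || exact ut).
  unfold affine_transform; f_equal; ring.
Qed.

End AffineSymmetry.

Definition HR_invariant (a A al ga B C : R) : Prop :=
  forall ux ut uxxt,
    HR_lhs a (A * al * ux + B) (A * ga * ut + C) (A * al * al * ga * uxxt) =
    HR_lhs a ux ut uxxt.

Lemma HR_solution_affine_transform (a A al be ga de B C D : R) (u : R -> R -> R) :
  HR_invariant a A al ga B C -> HR_solution a u ->
  HR_solution a (affine_transform A al be ga de B C D u).
Proof.
  rewrite !HR_solution_iff; intros inv [reg hu]; split.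
  - apply HR_regular_affine_transform, reg.
  - intros x t; rewrite HR_lhs_affine_transform, inv by exact reg; apply hu.
Qed.

Lemma HR_solution_translate (a be de D : R) (f : R -> R -> R) :
  HR_solution a f -> HR_solution a (fun x t => f (x + be) (t + de) + D).
Proof.
  intros hf; apply (HR_solution_ext a (affine_transform 1 1 be 1 de 0 0 D f)).
  - intros x t; unfold affine_transform; f_equal; rewrite !Rmult_1_l; ring.
  - apply HR_solution_affine_transform; [intros ux ut uxxt; unfold HR_lhs; ring | exact hf].
Qed.

Lemma HR_solution_scale (a l : R) (f : R -> R -> R) :
  a <> 0 -> l <> 0 -> HR_solution a f ->
  HR_solution a (fun x t => l * f (x * l) (t * / (l * l * l))
                            + x / a * (1 - l * l) + t * (1 - / (l * l))).
Proof.
  intros ha hl hf.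
  apply (HR_solution_ext a
    (affine_transform l l 0 (/ (l * l * l)) 0 ((1 - l * l) / a) (1 - / (l * l)) 0 f)).
  - intros x t; unfold affine_transform.
    rewrite !Rplus_0_r, (Rmult_comm l x), (Rmult_comm _ t); field; auto.
  - apply HR_solution_affine_transform; [| exact hf].
    intros ux ut uxxt; unfold HR_lhs; field; auto.
Qed.

Theorem theorem3p1 (a : R) (ha : a <> 0) (f : R -> R -> R) :
  HR_solution a f ->
  forall s : R,
    HR_solution a (fun x t => f (x - s) t) /\
    HR_solution a (fun x t => f x (t - s)) /\
    HR_solution a (fun x t => f x t + s / a) /\
    HR_solution a (fun x t => exp s * f (x * exp s) (t * exp (- (3 * s)))
                              + x / a * (1 - exp (2 * s))
                              + t * (1 - exp (- (2 * s)))).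
Proof.
  intros hf s; split; [| split; [| split]].
  - eapply HR_solution_ext; [| exact (HR_solution_translate a (- s) 0 0 f hf)].
    intros x t; cbv beta; rewrite !Rplus_0_r; reflexivity.
  - eapply HR_solution_ext; [| exact (HR_solution_translate a 0 (- s) 0 f hf)].
    intros x t; cbv beta; rewrite !Rplus_0_r; reflexivity.
  - eapply HR_solution_ext; [| exact (HR_solution_translate a 0 0 (s / a) f hf)].
    intros x t; cbv beta; rewrite !Rplus_0_r; reflexivity.
  - assert (exp_double : exp (2 * s) = exp s * exp s)
      by (rewrite <- exp_plus; f_equal; ring).
    assert (exp_triple : exp (3 * s) = exp s * exp s * exp s)
      by (rewrite <- !exp_plus; f_equal; ring).
    rewrite !exp_Ropp, exp_double, exp_triple.
    exact (HR_solution_scale a (exp s) f ha (Rgt_not_eq _ _ (exp_pos s)) hf).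
Qed.
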